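(* Let $J\in\mathbb{R}\cup\{\infty\}$ and $K\in\mathbb{R}$ with $J>K$. If $(x_n)_{n\in\mathbb{Z}}\in\mathcal{X}^!_{J,K}$, then there exists at most one sequence $(u_n)_{n\in\mathbb{Z}}\in\mathbb{R}^{\mathbb{Z}}$ such that $\left(F^{(J,K)}_{udK}\right)^{(2)}(x_n,u_{n-1})=u_n$ for all $n\in\mathbb{Z}$.
   Context: $F^{(J,K)}_{udK}(x,u):=\big(u-\max\{x+u-J,0\}+\max\{x+u-K,0\},\;x-\max\{x+u-K,0\}+\max\{x+u-J,0\}\big)$ for $x,u\in\mathbb{R}$, with $\max\{x+u-\infty,0\}:=0$; the superscript $(2)$ denotes the second coordinate. For $J=\infty>K$, $\mathcal{X}^!_{J,K}:=\{(x_n)_{n\in\mathbb{Z}}\in\mathbb{R}^{\mathbb{Z}}:\limsup_{n\to-\infty}\mathbf{1}_{\{x_n+x_{n+1}\le K\}}=1\}$; for $\infty>J>K$, $\mathcal{X}^!_{J,K}:=\{(x_n)_{n\in\mathbb{Z}}:\limsup_{n\to-\infty}\mathbf{1}_{\{x_n+x_{n+1}\le K\}\cup\{x_n+x_{n+1}\ge2J-K\}}=1\}$. *)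

From Stdlib Require Import Reals ZArith.
Open Scope R_scope.

(* J ∈ R ∪ {∞} is modelled as [option R]: [None] = ∞, [Some j] = j. *)
Definition Rbar_J := option R.

Definition maxJ (J : option R) (s : R) : R :=
  match J with None => 0 | Some j => Rmax (s - j) 0 end.

Definition F_udK (J : option R) (K : R) (x u : R) : R * R :=
  (u - maxJ J (x + u) + Rmax (x + u - K) 0,
   x - Rmax (x + u - K) 0 + maxJ J (x + u)).

Definition J_gt_K (J : option R) (K : R) : Prop :=
  match J with None => True | Some j => j > K end.

Definition X_event (J : option R) (K : R) (x : Z -> R) (n : Z) : Prop :=
  match J with
  | None => x n + x (n + 1)%Z <= K
  | Some j => x n + x (n + 1)%Z <= K \/ x n + x (n + 1)%Z >= 2 * j - K
  end.

(* limsup_{n -> -∞} 1_{event n} = 1, i.e. the event occurs for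
   infinitely many negative n (arbitrarily negative n). *)
Definition in_Xbang (J : option R) (K : R) (x : Z -> R) : Prop :=
  forall N : Z, exists n : Z, (n <= N)%Z /\ X_event J K x n.

From Stdlib Require Import Reals ZArith Lra Lia.
Open Scope R_scope.

(* The map u |-> snd (F_udK J K x u) takes values in [x - (J - K), x], so
   x_m + x_(m+1) <= K forces x_(m+1) + u_m <= K, and x_m + x_(m+1) >= 2J - K
   forces x_(m+1) + u_m >= J.  In either case u_(m+1) is x_(m+1) resp.
   x_(m+1) + K - J, whatever u_(m-1) was.  Every solution therefore forgets
   its past at each event time, and events occur arbitrarily far back. *)

Definition is_udK_orbit (J : option R) (K : R) (x u : Z -> R) : Prop :=
  forall n : Z, snd (F_udK J K (x n) (u (n - 1)%Z)) = u n.

Ltac split_Rmax := unfold Rmax in *; repeat destruct Rle_dec; lra.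

Lemma F_udK_snd_le (J : option R) (K x u : R) :
  J_gt_K J K -> snd (F_udK J K x u) <= x.
Proof. destruct J as [j|]; simpl; intros; split_Rmax. Qed.

Lemma F_udK_snd_ge (j K x u : R) :
  j > K -> x + K - j <= snd (F_udK (Some j) K x u).
Proof. simpl; intros; split_Rmax. Qed.

Lemma F_udK_snd_low (J : option R) (K x u : R) :
  J_gt_K J K -> x + u <= K -> snd (F_udK J K x u) = x.
Proof. destruct J as [j|]; simpl; intros; split_Rmax. Qed.

Lemma F_udK_snd_high (j K x u : R) :
  j > K -> j <= x + u -> snd (F_udK (Some j) K x u) = x + K - j.
Proof. simpl; intros; split_Rmax. Qed.

Lemma udK_orbits_agree_after_event (J : option R) (K : R) (x u v : Z -> R) (m : Z) :
  J_gt_K J K -> X_event J K x m ->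
  is_udK_orbit J K x u -> is_udK_orbit J K x v -> u (m + 1)%Z = v (m + 1)%Z.
Proof.
  intros HJK Hev Hu Hv.
  rewrite <- (Hu (m + 1)%Z), <- (Hv (m + 1)%Z).
  replace (m + 1 - 1)%Z with m by ring.
  assert (Hu_le := F_udK_snd_le J K (x m) (u (m - 1)%Z) HJK).
  assert (Hv_le := F_udK_snd_le J K (x m) (v (m - 1)%Z) HJK).
  rewrite Hu in Hu_le; rewrite Hv in Hv_le.
  destruct J as [j|]; simpl in Hev.
  - destruct Hev as [Hlow | Hhigh].
    + rewrite !F_udK_snd_low by (assumption || lra). reflexivity.
    + assert (Hu_ge := F_udK_snd_ge j K (x m) (u (m - 1)%Z) HJK).
      assert (Hv_ge := F_udK_snd_ge j K (x m) (v (m - 1)%Z) HJK).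
      rewrite Hu in Hu_ge; rewrite Hv in Hv_ge; simpl in HJK.
      rewrite !F_udK_snd_high by lra. reflexivity.
  - rewrite !F_udK_snd_low by (exact I || lra). reflexivity.
Qed.

Lemma udK_orbits_agree_forward (J : option R) (K : R) (x u v : Z -> R) (m : Z) :
  is_udK_orbit J K x u -> is_udK_orbit J K x v -> u m = v m ->
  forall n : Z, (m <= n)%Z -> u n = v n.
Proof.
  intros Hu Hv Hm.
  apply Z.le_ind; [intros ? ? ->; reflexivity | exact Hm |].
  intros n _ IH.
  rewrite <- (Hu (Z.succ n)), <- (Hv (Z.succ n)), Z.sub_1_r, Z.pred_succ, IH.
  reflexivity.
Qed.

Theorem lemma3p5 (J : option R) (K : R) (x : Z -> R) :
  J_gt_K J K ->
  in_Xbang J K x ->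
  forall u v : Z -> R,
    (forall n : Z, snd (F_udK J K (x n) (u (n - 1)%Z)) = u n) ->
    (forall n : Z, snd (F_udK J K (x n) (v (n - 1)%Z)) = v n) ->
    forall n : Z, u n = v n.
Proof.
  intros HJK HX u v Hu Hv n.
  destruct (HX (n - 1)%Z) as [m [Hmn Hev]].
  apply (udK_orbits_agree_forward J K x u v (m + 1)); [assumption .. | | lia].
  exact (udK_orbits_agree_after_event J K x u v m HJK Hev Hu Hv).
Qed.
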